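(* Let $r\ge2$ and suppose that $w^\ast(r-1,3)$ exists but $w^\ast(r,3)$ does not exist. Then there exists an infinite word $d_1d_2d_3\cdots$ over a finite set of positive integers that contains no additive square, i.e. there are no $m\ge0$, $\ell\ge1$ with $\sum_{i=m+1}^{m+\ell}d_i=\sum_{i=m+\ell+1}^{m+2\ell}d_i$.
   Context: An increasing sequence of positive integers $a_1<a_2<\cdots$ contains a double $k$-term arithmetic progression if there are indices $p_1<\cdots<p_k$ such that both $\{p_1,\dots,p_k\}$ and $\{a_{p_1},\dots,a_{p_k}\}$ are arithmetic progressions. For an $r$-coloring of an interval, each color class is regarded as an increasing sequence by listing its elements in increasing order; a monochromatic double $k$-term arithmetic progression is a double $k$-term arithmetic progression in some color class. For integers $r,k\ge1$, $w^\ast(r,k)$ denotes the least integer $N$, if it exists, such that every $r$-coloring of $[1,N]=\{1,\dots,N\}$ has a monochromatic double $k$-term arithmetic progression. An additive square in a word $x_1x_2\cdots$ of integers is a pair of adjacent factors (blocks of consecutive letters) of the same length and the same sum. *)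

From mathcomp Require Import all_boot.
Set Implicit Arguments. Unset Strict Implicit. Unset Printing Implicit Defensive.

Definition has_double_AP (k : nat) (s : seq nat) : Prop :=
  exists p d e : nat, 0 < d /\ p + k.-1 * d < size s /\
    forall i, i < k -> nth 0 s (p + i * d) = nth 0 s p + i * e.

Definition color_class (r N : nat) (c : nat -> 'I_r) (j : 'I_r) : seq nat :=
  [seq x <- iota 1 N | c x == j].

Definition mono_dAP_forced (r k N : nat) : Prop :=
  forall c : nat -> 'I_r, exists j : 'I_r, has_double_AP k (color_class N c j).

Definition wstar_exists (r k : nat) : Prop := exists N : nat, mono_dAP_forced r k N.

(* The word d_1 d_2 ... (d : nat -> nat, d 0 unused) has no additive square. *)
Definition additive_square_free (d : nat -> nat) : Prop :=
  forall m l : nat, 0 < l ->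
    \sum_(m.+1 <= i < (m + l).+1) d i <> \sum_((m + l).+1 <= i < (m + 2 * l).+1) d i.

From mathcomp Require Import all_boot zify.
From Stdlib Require Import Classical ClassicalEpsilon.
Set Implicit Arguments. Unset Strict Implicit. Unset Printing Implicit Defensive.

(* Let N0 = w*(r-1,3) and fix any length L.  Since w*(r,3) does
   not exist, some r-colouring of [1, (L+1) N0] has no monochromatic double
   3-AP.  Then every window of N0 consecutive integers meets the last colour:
   otherwise the window is (r-1)-coloured, hence contains a double 3-AP of one
   colour, and a translated progression stays a double AP inside the whole
   colour class.  So the last colour class s = s_0 < s_1 < ... has at least
   L+1 elements and gaps s_{i+1} - s_i in [1, N0].  An additive square in the
   gap word, of block length l starting at m, would make s_m, s_{m+l},
   s_{m+2l} a double 3-AP; hence there are arbitrarily long additive-square-free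
   words over {1, ..., N0}.  A König's-lemma (compactness) argument turns them
   into one infinite additive-square-free word over {1, ..., N0}. *)

Definition square_free_seq (w : seq nat) : Prop :=
  forall m l, 0 < l -> m + 2 * l <= size w ->
  \sum_(m <= i < m + l) nth 0 w i <> \sum_(m + l <= i < m + 2 * l) nth 0 w i.

Lemma sum_nth_cat (w v : seq nat) a b : b <= size w ->
  \sum_(a <= i < b) nth 0 (w ++ v) i = \sum_(a <= i < b) nth 0 w i.
Proof.
move=> hb; apply: eq_big_nat => i /andP[_ hi].
by rewrite nth_cat (leq_trans hi hb).
Qed.

Lemma square_free_seq_prefix (w v : seq nat) :
  square_free_seq (w ++ v) -> square_free_seq w.
Proof.
move=> sqf m l l_gt0 hsize.
rewrite -(sum_nth_cat v); last by lia.
rewrite -[in RHS](sum_nth_cat v) //.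
by apply: sqf => //; rewrite size_cat; lia.
Qed.

Lemma square_free_of_prefixes (f : nat -> nat) :
  (forall n, square_free_seq (mkseq f n)) -> additive_square_free (fun i => f i.-1).
Proof.
have shift a b n : b <= n ->
    \sum_(a.+1 <= i < b.+1) f i.-1 = \sum_(a <= i < b) nth 0 (mkseq f n) i.
  move=> hb; rewrite big_add1 /=; apply: eq_big_nat => i /andP[_ hi].
  by rewrite nth_mkseq //; lia.
move=> sqf m l l_gt0.
rewrite (shift _ _ (m + 2 * l)); last by lia.
rewrite (shift _ _ (m + 2 * l)) //.
by apply: sqf; rewrite // size_mkseq.
Qed.

Lemma common_bound (Q : nat -> nat -> Prop) k :
  (forall x B B', B <= B' -> Q x B -> Q x B') ->
  (forall x, x <= k -> exists B, Q x B) -> exists B, forall x, x <= k -> Q x B.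
Proof.
move=> Qmono; elim: k => [|k IHk] hQ.
  have [B QB] := hQ 0 (leqnn 0).
  by exists B => x; rewrite leqn0 => /eqP ->.
have [B QB] := IHk (fun x hx => hQ x (leqW hx)).
have [B' QB'] := hQ k.+1 (leqnn _).
exists (maxn B B') => x; rewrite leq_eqVlt => /orP[/eqP -> | hx].
  by apply: Qmono QB'; rewrite leq_maxr.
by apply: Qmono (QB x hx); rewrite leq_maxl.
Qed.

Section Konig.
Variables (N : nat) (P : seq nat -> Prop).
Hypothesis P_prefix : forall w v, P (w ++ v) -> P w.
Hypothesis P_bounded : forall w, P w -> all (fun x => x <= N) w.

Definition extendable (w : seq nat) : Prop :=
  forall L, exists v, P (w ++ v) /\ L <= size v.

Lemma extendable_rcons w : extendable w -> exists x, extendable (rcons w x).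
Proof.
move=> ext_w; apply: NNPP => no_letter.
have bounded x : exists B, forall v, P (rcons w x ++ v) -> size v < B.
  have /not_all_ex_not [B HB] : ~ extendable (rcons w x) by move=> ?; apply: no_letter; exists x.
  exists B => v Pv; rewrite ltnNge; apply/negP => hB; apply: HB; by exists v.
have [B HB] : exists B, forall x, x <= N ->
    forall v, P (rcons w x ++ v) -> size v < B.
  apply: common_bound => [x B B' hB QB v Pv|x _]; last exact: bounded.
  exact: leq_trans (QB v Pv) hB.
have [[|x v] [Pv hsize]] := ext_w B.+1; first by [].
have /P_bounded : P (w ++ [:: x]) by apply: (P_prefix (v := v)); rewrite -catA.
rewrite all_cat /= andbT => /andP[_ x_le_N].
by have := HB x x_le_N v; rewrite cat_rcons => /(_ Pv); rewrite /= in hsize; lia.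
Qed.

Definition next_letter (w : seq nat) : nat :=
  epsilon (inhabits 0) (fun x => extendable (rcons w x)).

Fixpoint branch n : seq nat :=
  if n is n'.+1 then rcons (branch n') (next_letter (branch n')) else [::].

Lemma branch_extendable n : extendable [::] -> extendable (branch n).
Proof.
move=> ext0; elim: n => [//|n IHn] /=.
have [x hx] := extendable_rcons IHn.
exact: (epsilon_spec _ (fun y => extendable (rcons (branch n) y)) (ex_intro _ x hx)).
Qed.

Lemma branch_mkseq n : branch n = mkseq (fun i => next_letter (branch i)) n.
Proof. by elim: n => //= n IHn; rewrite mkseqS -IHn. Qed.

Lemma konig : extendable [::] -> exists f : nat -> nat, forall n, P (mkseq f n).
Proof.
move=> ext0; exists (fun i => next_letter (branch i)) => n.
have [v [Pv _]] := branch_extendable n ext0 0.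
by rewrite -branch_mkseq; apply: P_prefix Pv.
Qed.

End Konig.

Lemma has_double_AP_embed k a (A C s : seq nat) :
  has_double_AP k s -> has_double_AP k (A ++ map (addn a) s ++ C).
Proof.
move=> [p [d [e [d_gt0 [hsize AP]]]]].
have at_shift q : q < size s -> nth 0 (A ++ map (addn a) s ++ C) (size A + q) = a + nth 0 s q.
  move=> hq; rewrite nth_cat ltnNge leq_addr /= addKn nth_cat size_map hq.
  by rewrite (nth_map 0).
have in_range i : i < k -> p + i * d < size s.
  move=> hi; apply: leq_ltn_trans hsize; rewrite leq_add2l leq_mul2r; lia.
exists (size A + p), d, e; split=> //; split.
  by rewrite !size_cat size_map; move: hsize; lia.
move=> i hi; have := in_range 0 (leq_ltn_trans (leq0n i) hi).
rewrite mul0n addn0 => hp.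
by rewrite -addnA !at_shift ?AP ?in_range ?addnA.
Qed.

Lemma color_class_window r r' M N0 a (c : nat -> 'I_r) (c' : nat -> 'I_r') j j' :
  a + N0 <= M -> (forall y, 0 < y <= N0 -> (c (a + y) == j) = (c' y == j')) ->
  exists A C, color_class M c j = A ++ map (addn a) (color_class N0 c' j') ++ C.
Proof.
move=> hM same; rewrite /color_class.
have -> : M = a + (N0 + (M - a - N0)) by lia.
rewrite iotaD iotaD !filter_cat; do 2!eexists; congr (_ ++ (_ ++ _)).
rewrite addnC iotaDl filter_map; congr map.
by apply: eq_in_filter => y; rewrite mem_iota => hy; rewrite /= same //; lia.
Qed.

Lemma last_color_in_windows k r N0 M (c : nat -> 'I_r.+2) :
  mono_dAP_forced r.+1 k N0 -> (forall j, ~ has_double_AP k (color_class M c j)) ->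
  forall a, a + N0 <= M -> exists2 x, a < x <= a + N0 & c x = ord_max.
Proof.
move=> forced no_AP a hM; apply: NNPP => no_last.
have small y : 0 < y <= N0 -> c (a + y) < r.+1.
  move=> hy; have := ltn_ord (c (a + y)); rewrite ltnS leq_eqVlt => /orP[/eqP E|//].
  by case: no_last; exists (a + y); [lia | apply: val_inj; rewrite /= E].
pose c' y : 'I_r.+1 := inord (c (a + y)).
have [j' APj'] := forced c'.
pose j := widen_ord (leqnSn r.+1) j'.
have [A [C decomp]] : exists A C,
    color_class M c j = A ++ map (addn a) (color_class N0 c' j') ++ C.
  apply: color_class_window => // y hy.
  by rewrite /c' -[RHS](inj_eq val_inj) /= inordK ?small.
by apply: (no_AP j); rewrite decomp; apply: has_double_AP_embed.
Qed.

Lemma count_windows (p : pred nat) N0 K :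
  (forall a, a + N0 <= K * N0 -> exists2 x, a < x <= a + N0 & p x) ->
  K <= count p (iota 1 (K * N0)).
Proof.
elim: K => [//|K IHK] windows.
have hK : K * N0 + N0 <= K.+1 * N0 by rewrite mulSn addnC.
have [x hx px] := windows (K * N0) hK.
have : K <= count p (iota 1 (K * N0)).
  by apply: IHK => a ha; apply: windows; lia.
have : 0 < count p (iota (1 + K * N0) N0).
  by rewrite -has_count; apply/hasP; exists x; rewrite // mem_iota; lia.
have -> : K.+1 * N0 = K * N0 + N0 by rewrite mulSn addnC.
by rewrite iotaD count_cat; lia.
Qed.

Definition gaps (s : seq nat) : seq nat :=
  mkseq (fun i => nth 0 s i.+1 - nth 0 s i) (size s).-1.

Lemma size_gaps s : size (gaps s) = (size s).-1.
Proof. exact: size_mkseq. Qed.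

Lemma sorted_nth_leq s i j : sorted ltn s -> i <= j < size s -> nth 0 s i <= nth 0 s j.
Proof.
rewrite ltn_sorted_uniq_leq => /andP[_ s_sorted] /andP[hij hj].
by apply: (sorted_leq_nth leq_trans leqnn) => //; rewrite inE; lia.
Qed.

Lemma sum_gaps s a b : sorted ltn s -> a <= b < size s ->
  \sum_(a <= i < b) nth 0 (gaps s) i = nth 0 s b - nth 0 s a.
Proof.
move=> s_sorted /andP[hab hb].
rewrite (eq_big_nat _ _ (F2 := fun i => nth 0 s i.+1 - nth 0 s i)); last first.
  by move=> i hi; rewrite nth_mkseq //; lia.
by apply: telescope_sumn_in => // i hi; apply: sorted_nth_leq; lia.
Qed.

Lemma gaps_square_free s :
  sorted ltn s -> ~ has_double_AP 3 s -> square_free_seq (gaps s).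
Proof.
move=> s_sorted no_AP m l l_gt0; rewrite size_gaps => hsize.
rewrite !sum_gaps //; try lia.
have le1 : nth 0 s m <= nth 0 s (m + l) by apply: sorted_nth_leq; lia.
have le2 : nth 0 s (m + l) <= nth 0 s (m + 2 * l) by apply: sorted_nth_leq; lia.
move=> equal_steps; apply: no_AP.
exists m, l, (nth 0 s (m + l) - nth 0 s m); split=> //; split; first by lia.
case=> [|[|[|i]]] //= _; rewrite ?mul0n ?mul1n ?addn0; lia.
Qed.

Lemma gaps_bounded s M N0 : sorted ltn s -> (forall x, x \in s -> x <= M) ->
  (forall a, a + N0 <= M -> exists2 y, y \in s & a < y <= a + N0) ->
  all (fun g => 0 < g <= N0) (gaps s).
Proof.
move=> s_sorted s_le_M windows.
apply/allP => g /(nthP 0) [i]; rewrite size_gaps => hi <-; rewrite nth_mkseq //.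
have hi1 : i.+1 < size s by rewrite -ltn_predRL.
have lt_next : nth 0 s i < nth 0 s i.+1.
  by apply: (sorted_ltn_nth ltn_trans) => //; rewrite inE; lia.
have next_le_M : nth 0 s i.+1 <= M by rewrite s_le_M // mem_nth.
case: (leqP (nth 0 s i + N0) M) => [hM|hM]; last by lia.
have [y y_in hy] := windows _ hM.
suff : nth 0 s i.+1 <= y by lia.
have y_def := nth_index 0 y_in.
case: (leqP (index y s) i) => hidx.
  have : y <= nth 0 s i by rewrite -y_def; apply: sorted_nth_leq; lia.
  lia.
by rewrite -y_def; apply: sorted_nth_leq; rewrite // index_mem y_in andbT.
Qed.

Definition good_word (N : nat) (w : seq nat) : Prop :=
  square_free_seq w /\ all (fun x => 0 < x <= N) w.

Lemma good_word_prefix N (w v : seq nat) : good_word N (w ++ v) -> good_word N w.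
Proof.
move=> [sqf letters]; split; first exact: square_free_seq_prefix sqf.
by move: letters; rewrite all_cat => /andP[].
Qed.

Lemma long_good_words r N0 :
  mono_dAP_forced r.+1 3 N0 -> ~ wstar_exists r.+2 3 ->
  forall L, exists w, good_word N0 w /\ L <= size w.
Proof.
move=> forced not_forced L; pose M := L.+1 * N0.
have [c no_AP] : exists c : nat -> 'I_r.+2,
    forall j, ~ has_double_AP 3 (color_class M c j).
  apply: NNPP => no_col; apply: not_forced; exists M => c; apply: NNPP => H.
  by apply: no_col; exists c => j hj; apply: H; exists j.
pose s := color_class M c ord_max.
have s_sorted : sorted ltn s := sorted_filter ltn_trans _ (iota_ltn_sorted 1 M).
have mem_s x : (x \in s) = (0 < x <= M) && (c x == ord_max).
  by rewrite mem_filter mem_iota andbC; congr (_ && _); apply/idP/idP; lia.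
have windows a : a + N0 <= M -> exists2 y, y \in s & a < y <= a + N0.
  move=> hM; have [y hy cy] := last_color_in_windows forced no_AP hM.
  by exists y; rewrite // mem_s cy eqxx andbT; lia.
have size_s : L.+1 <= size s.
  rewrite size_filter; apply: count_windows => a /windows [y].
  by rewrite mem_s => /andP[_ /eqP cy] hy; exists y; rewrite // cy eqxx.
exists (gaps s); split; last by rewrite size_gaps; lia.
split; first by apply: gaps_square_free => //; exact: no_AP.
by apply: gaps_bounded s_sorted _ windows => x; rewrite mem_s => /andP[/andP[]].
Qed.

Theorem mainTheorem2 (r : nat) :
  2 <= r -> wstar_exists r.-1 3 -> ~ wstar_exists r 3 ->
  exists (d : nat -> nat) (S : seq nat),
    (forall x, x \in S -> 0 < x) /\ (forall i, 0 < i -> d i \in S) /\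
    additive_square_free d.
Proof.
case: r => [|[|r]] // _ [N0 forced] not_forced.
have [f good_f] : exists f, forall n, good_word N0 (mkseq f n).
  apply: (@konig N0 (good_word N0)); first exact: good_word_prefix.
    by move=> w [_ /allP letters]; apply/allP => x /letters /andP[].
  move=> L; have [w long_w] := long_good_words forced not_forced L.
  by exists w; rewrite cat0s.
exists (fun i => f i.-1), (iota 1 N0); split; first by move=> x; rewrite mem_iota; lia.
split; last by apply: square_free_of_prefixes => n; case: (good_f n).
move=> i i_gt0; have [_ /allP bnd] := good_f i.
have /bnd : f i.-1 \in mkseq f i by apply/mapP; exists i.-1; rewrite // mem_iota; lia.
by rewrite mem_iota; lia.
Qed.
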